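(* For a variety $\mathcal{V}$ the following are equivalent: (1) for every $\mathbf{A}\in\mathcal{V}$ and all congruences $\alpha,\beta,\gamma$ of $\mathbf{A}$, $\alpha\wedge(\beta\circ\gamma)\subseteq(\alpha\wedge\beta)\circ\gamma$; (2) for every $\mathbf{A}\in\mathcal{V}$ and all compatible reflexive relations $R,S,T$ of $\mathbf{A}$, $R\wedge(S\circ T)\subseteq(R\wedge S)\circ T$.
   Context: $\wedge$ is intersection and $\circ$ is relational composition. A compatible reflexive relation of $\mathbf{A}$ is a reflexive subuniverse of $\mathbf{A}^2$. *)

From mathcomp Require Import all_boot.
Set Implicit Arguments. Unset Strict Implicit. Unset Printing Implicit Defensive.

Record signature := Signature {
  op_sym : Type;
  arity : op_sym -> nat
}.

Record algebra (sg : signature) := Algebra {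
  carrier :> Type;
  interp : forall f : op_sym sg, ('I_(arity f) -> carrier) -> carrier
}.

Inductive term (sg : signature) : Type :=
| Var : nat -> term sg
| App : forall f : op_sym sg, ('I_(arity f) -> term sg) -> term sg.

Fixpoint eval (sg : signature) (A : algebra sg) (v : nat -> A) (t : term sg) : A :=
  match t with
  | Var n => v n
  | App f ts => @interp sg A f (fun i => eval v (ts i))
  end.

Definition satisfies (sg : signature) (A : algebra sg) (s t : term sg) : Prop :=
  forall v : nat -> A, eval v s = eval v t.

(* The variety defined by the set of identities E (a binary predicate on terms):
   A is in the variety iff it satisfies all identities in E. *)
Definition in_variety (sg : signature) (E : term sg -> term sg -> Prop)
  (A : algebra sg) : Prop :=
  forall s t, E s t -> satisfies A s t.

Definition compatible (sg : signature) (A : algebra sg) (R : A -> A -> Prop) : Prop :=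
  forall (f : op_sym sg) (a b : 'I_(arity f) -> A),
    (forall i, R (a i) (b i)) -> R (@interp sg A f a) (@interp sg A f b).

Definition reflexive_rel (X : Type) (R : X -> X -> Prop) : Prop := forall x, R x x.

Definition compatible_reflexive (sg : signature) (A : algebra sg)
  (R : A -> A -> Prop) : Prop :=
  reflexive_rel R /\ compatible R.

Definition congruence (sg : signature) (A : algebra sg) (R : A -> A -> Prop) : Prop :=
  [/\ reflexive_rel R, (forall x y, R x y -> R y x),
      (forall x y z, R x y -> R y z -> R x z) & compatible R].

Definition rel_meet (X : Type) (R S : X -> X -> Prop) : X -> X -> Prop :=
  fun x y => R x y /\ S x y.

Definition rel_comp (X : Type) (R S : X -> X -> Prop) : X -> X -> Prop :=
  fun x z => exists y, R x y /\ S y z.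

Definition rel_sub (X : Type) (R S : X -> X -> Prop) : Prop :=
  forall x y, R x y -> S x y.

(* Since congruences are compatible reflexive relations, (2) => (1) is
   immediate.  For (1) => (2), fix A in the variety and compatible reflexive
   relations R, S, T of A.  The ternary operations on A preserving R, S and T
   form a subalgebra B of the power A^(A^3); B lies in the variety because
   identities hold pointwise.  On B, "agreeing on all triples of the shape
   (x,y,x)", "(x,x,y)", "(x,y,y)" are congruences alpha, beta, gamma.  The
   projections p1 and p3 are alpha-related and p1 beta p2 gamma p3, so (1)
   yields d in B with  d x y x = x,  d x x y = x,  d x y y = y.  Such a d,
   preserving R, S, T, transforms any witness  a R c, a S b T c  into the
   witness  a (R /\ S) d(a,b,c) T c. *)
From Stdlib Require Import FunctionalExtensionality ProofIrrelevance.
From mathcomp Require Import all_boot.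

Set Implicit Arguments. Unset Strict Implicit. Unset Printing Implicit Defensive.

Definition preserves3 (X : Type) (Q : X -> X -> Prop) (f : X -> X -> X -> X) :=
  forall x y z x' y' z', Q x x' -> Q y y' -> Q z z' -> Q (f x y z) (f x' y' z').

Section PolymorphismAlgebra.
Variables (sg : signature) (A : algebra sg).
Variable Rels : (A -> A -> Prop) -> Prop.
Hypothesis Rels_compatible : forall Q, Rels Q -> compatible Q.

Record pol := Pol {
  pol_fun :> A -> A -> A -> A;
  pol_preserves : forall Q, Rels Q -> preserves3 Q pol_fun
}.

Lemma pol_inj (u w : pol) : pol_fun u = pol_fun w -> u = w.
Proof.
case: u w => [u pu] [w pw] /= eq_uw; subst w.
by rewrite (proof_irrelevance _ pu pw).
Qed.

Lemma preserves3_interp (Q : A -> A -> Prop) (f : op_sym sg)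
    (a : 'I_(arity f) -> A -> A -> A -> A) :
  compatible Q -> (forall i, preserves3 Q (a i)) ->
  preserves3 Q (fun x y z => interp (fun i => a i x y z)).
Proof. by move=> cQ pa x y z x' y' z' Qx Qy Qz; apply: cQ => i; apply: pa. Qed.

Definition pol_interp (f : op_sym sg) (a : 'I_(arity f) -> pol) : pol :=
  @Pol (fun x y z => interp (fun i => a i x y z))
       (fun Q RQ => preserves3_interp (Rels_compatible RQ)
                      (fun i => pol_preserves (a i) RQ)).

Definition pol_algebra : algebra sg := @Algebra sg pol pol_interp.

Lemma eval_pol (v : nat -> pol_algebra) (t : term sg) (x y z : A) :
  eval v t x y z = eval (fun n => v n x y z) t.
Proof.
elim: t => [n|f ts IH] //=.
by congr interp; apply: functional_extensionality => i.
Qed.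

Lemma pol_algebra_in_variety (E : term sg -> term sg -> Prop) :
  in_variety E A -> in_variety E pol_algebra.
Proof.
move=> EA s t Est v; apply: pol_inj.
do 3![apply: functional_extensionality => ?]; rewrite !eval_pol.
exact: EA.
Qed.

Definition agree_on (P : A -> A -> A -> Prop) (u w : pol_algebra) : Prop :=
  forall x y z, P x y z -> u x y z = w x y z.

Lemma agree_on_congruence (P : A -> A -> A -> Prop) :
  congruence (agree_on P).
Proof.
split.
- by move=> u x y z.
- by move=> u w uw x y z Pxyz; rewrite uw.
- by move=> u w r uw wr x y z Pxyz; rewrite uw ?wr.
- move=> f a b ab x y z Pxyz /=.
  by congr interp; apply: functional_extensionality => i; apply: ab.
Qed.

Definition pol_proj1 : pol := @Pol (fun x _ _ => x) (fun _ _ _ _ _ _ _ _ Qx _ _ => Qx).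
Definition pol_proj2 : pol := @Pol (fun _ y _ => y) (fun _ _ _ _ _ _ _ _ _ Qy _ => Qy).
Definition pol_proj3 : pol := @Pol (fun _ _ z => z) (fun _ _ _ _ _ _ _ _ _ _ Qz => Qz).

Lemma pol_shifting_operation :
  (forall alpha beta gamma : pol_algebra -> pol_algebra -> Prop,
     congruence alpha -> congruence beta -> congruence gamma ->
     rel_sub (rel_meet alpha (rel_comp beta gamma))
             (rel_comp (rel_meet alpha beta) gamma)) ->
  exists d : pol, [/\ forall x y, d x y x = x,
                      forall x y, d x x y = x
                    & forall x y, d x y y = y].
Proof.
move=> cong_incl.
pose alpha := agree_on (fun x _ z => x = z).
pose beta := agree_on (fun x y _ => x = y).
pose gamma := agree_on (fun _ y z => y = z).
have alpha13 : alpha pol_proj1 pol_proj3 by move=> x y z.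
have beta12 : beta pol_proj1 pol_proj2 by move=> x y z.
have gamma23 : gamma pol_proj2 pol_proj3 by move=> x y z.
have [d [[alpha1d beta1d] gammad3]] :=
  cong_incl alpha beta gamma (agree_on_congruence _) (agree_on_congruence _)
    (agree_on_congruence _) _ _ (conj alpha13 (ex_intro _ _ (conj beta12 gamma23))).
exists d; split=> x y.
- by rewrite -(alpha1d x y x).
- by rewrite -(beta1d x x y).
- by rewrite (gammad3 x y y).
Qed.

End PolymorphismAlgebra.

Lemma meet_comp_incl_of_shifting (X : Type) (R S T : X -> X -> Prop)
    (d : X -> X -> X -> X) :
  reflexive_rel R -> reflexive_rel S -> reflexive_rel T ->
  preserves3 R d -> preserves3 S d -> preserves3 T d ->
  (forall x y, d x y x = x) -> (forall x y, d x x y = x) ->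
  (forall x y, d x y y = y) ->
  rel_sub (rel_meet R (rel_comp S T)) (rel_comp (rel_meet R S) T).
Proof.
move=> rR rS rT dR dS dT d_xyx d_xxy d_xyy a c [Rac [b [Sab Tbc]]].
exists (d a b c); split; first split.
- by rewrite -{1}(d_xyx a b); apply: dR.
- by rewrite -{1}(d_xxy a c); apply: dS.
- by rewrite -{2}(d_xyy a c); apply: dT.
Qed.

Theorem theorem5p2 (sg : signature) (E : term sg -> term sg -> Prop) :
  (forall A : algebra sg, in_variety E A ->
     forall alpha beta gamma : A -> A -> Prop,
       congruence alpha -> congruence beta -> congruence gamma ->
       rel_sub (rel_meet alpha (rel_comp beta gamma))
               (rel_comp (rel_meet alpha beta) gamma))
  <->
  (forall A : algebra sg, in_variety E A ->
     forall R S T : A -> A -> Prop,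
       compatible_reflexive R -> compatible_reflexive S -> compatible_reflexive T ->
       rel_sub (rel_meet R (rel_comp S T))
               (rel_comp (rel_meet R S) T)).
Proof.
split=> [cong_incl A EA R S T [rR cR] [rS cS] [rT cT] | rel_incl A EA al be ga].
- pose Rels Q := Q = R \/ Q = S \/ Q = T.
  have Rels_compatible Q : Rels Q -> compatible Q
    by case=> [->|[->|->]].
  have [d [d_xyx d_xxy d_xyy]] :=
    pol_shifting_operation (cong_incl _ (pol_algebra_in_variety (Rels_compatible:=Rels_compatible) EA)).
  apply: (meet_comp_incl_of_shifting rR rS rT _ _ _ d_xyx d_xxy d_xyy);
    apply: pol_preserves; rewrite /Rels; tauto.
- move=> [ral _ _ cal] [rbe _ _ cbe] [rga _ _ cga].
  by apply: rel_incl.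
Qed.
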